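(* Let $\mathcal{H}$ be an $n$-dimensional complex Hilbert space and let $\rho_1,\dots,\rho_m$ be density operators on $\mathcal{H}$ whose eigenvectors collectively span $\mathcal{H}$, with prior probabilities $p_1,\dots,p_m>0$, $\sum_i p_i=1$. Write $\rho_i=\phi_i\phi_i^*$ for some matrices (factors) $\phi_i$, set $\psi_i=\sqrt{p_i}\,\phi_i$, let $\Psi$ be the matrix with block columns $\psi_1,\dots,\psi_m$, and let $T=(\Psi\Psi^* )^{-1/2}$. Let $\mu_i=T\psi_i$ and $\Sigma_i=\mu_i\mu_i^*$ (the least-squares measurement, LSM). If there is a constant $\alpha$, independent of $i$, such that $\mu_i^*\psi_i=\psi_i^*T\psi_i=\alpha I$ for every $i=1,\dots,m$, then the LSM $\{\Sigma_i\}$ minimizes the probability of a detection error, i.e. it maximizes $P_d=\sum_{i=1}^m p_i\operatorname{tr}(\rho_i\Pi_i)$ over all measurements $\{\Pi_i\}_{i=1}^m$ with $\Pi_i\ge 0$ and $\sum_{i=1}^m\Pi_i=I$.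
   Context: A density operator is a positive semidefinite Hermitian operator of trace one. A measurement is a collection of positive semidefinite Hermitian operators $\Pi_1,\dots,\Pi_m$ on $\mathcal{H}$ summing to the identity; the probability of correct detection is $P_d=\sum_i p_i\operatorname{tr}(\rho_i\Pi_i)$ and the probability of a detection error is $1-P_d$. $(\cdot)^{-1/2}$ denotes the inverse of the unique positive Hermitian square root; $\Psi\Psi^*=\sum_i\psi_i\psi_i^*$ is invertible because the eigenvectors of the $\rho_i$ span $\mathcal{H}$. $I$ in $\alpha I$ denotes the identity matrix of size equal to the number of columns of $\phi_i$. *)

(* Matrices over an arbitrary numClosedFieldType C
   (e.g. the complex numbers), H = column vectors 'cV[C]_n. *)
From HB Require Import structures.
From mathcomp Require Import all_boot all_order all_algebra.
Set Implicit Arguments. Unset Strict Implicit. Unset Printing Implicit Defensive.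
Import Order.TTheory GRing.Theory Num.Theory.
Local Open Scope ring_scope.

Definition ctmx {C : numClosedFieldType} {m n : nat} (A : 'M[C]_(m, n)) : 'M[C]_(n, m) :=
  map_mx Num.conj A^T.

Definition psdmx {C : numClosedFieldType} {n : nat} (A : 'M[C]_n) : Prop :=
  A = ctmx A /\ forall v : 'cV[C]_n, 0 <= (ctmx v *m A *m v) 0 0.

Definition density {C : numClosedFieldType} {n : nat} (rho : 'M[C]_n) : Prop :=
  psdmx rho /\ \tr rho = 1.

Definition is_measurement {C : numClosedFieldType} {n m : nat} (Pi : 'I_m -> 'M[C]_n) : Prop :=
  (forall i, psdmx (Pi i)) /\ \sum_i Pi i = 1%:M.

Definition Pd {C : numClosedFieldType} {n m : nat} (p : 'I_m -> C) (rho : 'I_m -> 'M[C]_n)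
  (Pi : 'I_m -> 'M[C]_n) : C :=
  \sum_i p i * \tr (rho i *m Pi i).

(* Weak duality: if Z is Hermitian and Z - p_i rho_i >= 0 for every i, then
   P_d(Pi) = sum_i tr(Z Pi_i) - sum_i tr((Z - p_i rho_i) Pi_i) <= tr Z for every
   measurement Pi.  The LSM attains this bound for Z = alpha T^-1.  Indeed
   Psi Psi^* is invertible (the range of a sum of Gram matrices X_i X_i^* is the
   sum of their ranges), so sum_i Sigma_i = T Psi Psi^* T = 1, and
   P_d(Sigma) = sum_i tr(psi_i (psi_i^* T psi_i) psi_i^* T) = alpha tr(Psi Psi^* T)
   = tr(alpha T^-1).  For dual feasibility write T = B^* B and Z_i = B psi_i:
   then Z_i^* Z_i = alpha I, so L = alpha I - Z_i Z_i^* satisfies L^* L = alpha L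
   and is positive, and alpha T^-1 - psi_i psi_i^* = B^-1 L B^-* is positive. *)

From HB Require Import structures.
From mathcomp Require Import all_boot all_order all_algebra.
Import Order.TTheory GRing.Theory Num.Theory.
Local Open Scope ring_scope.
Set Implicit Arguments. Unset Strict Implicit. Unset Printing Implicit Defensive.

Section ConjugateTranspose.
Variable C : numClosedFieldType.

Lemma ctmx_mul m n k (A : 'M[C]_(m, n)) (B : 'M[C]_(n, k)) :
  ctmx (A *m B) = ctmx B *m ctmx A.
Proof. by rewrite /ctmx trmx_mul map_mxM. Qed.

Lemma ctmxK m n (A : 'M[C]_(m, n)) : ctmx (ctmx A) = A.
Proof. by apply/matrixP => i j; rewrite !mxE conjCK. Qed.

Lemma ctmx0 m n : ctmx (0 : 'M[C]_(m, n)) = 0.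
Proof. by rewrite /ctmx trmx0 map_mx0. Qed.

Lemma ctmxB m n (A B : 'M[C]_(m, n)) : ctmx (A - B) = ctmx A - ctmx B.
Proof. by rewrite /ctmx linearB map_mxB. Qed.

Lemma ctmxZ m n a (A : 'M[C]_(m, n)) : ctmx (a *: A) = a^* *: ctmx A.
Proof. by apply/matrixP => i j; rewrite !mxE rmorphM. Qed.

Lemma ctmx_scalar n a : ctmx (a%:M : 'M[C]_n) = a^*%:M.
Proof. by rewrite /ctmx tr_scalar_mx map_scalar_mx. Qed.

Lemma ctmx_inv n (A : 'M[C]_n) : ctmx (invmx A) = invmx (ctmx A).
Proof. by rewrite /ctmx trmx_inv map_invmx. Qed.

Lemma ctmx_sum m n (I : finType) (F : I -> 'M[C]_(m, n)) :
  ctmx (\sum_i F i) = \sum_i ctmx (F i).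
Proof.
apply/matrixP => i j; rewrite !mxE !summxE rmorph_sum.
by apply: eq_bigr => k _; rewrite !mxE.
Qed.

Lemma ctmx_mul_ctmx m n (X : 'M[C]_(m, n)) : ctmx (X *m ctmx X) = X *m ctmx X.
Proof. by rewrite ctmx_mul ctmxK. Qed.

End ConjugateTranspose.

Section TraceNorm.
Variable C : numClosedFieldType.

Lemma mxtrace_mul_ctmxE m n (X : 'M[C]_(m, n)) :
  \tr (X *m ctmx X) = \sum_i \sum_j X i j * (X i j)^*.
Proof. by apply: eq_bigr => i _; rewrite mxE; apply: eq_bigr => j _; rewrite !mxE. Qed.

Lemma mxtrace_mul_ctmx_ge0 m n (X : 'M[C]_(m, n)) : 0 <= \tr (X *m ctmx X).
Proof.
by rewrite mxtrace_mul_ctmxE; do 2!apply: sumr_ge0 => ? _; apply: mul_conjC_ge0.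
Qed.

Lemma mxtrace_mul_ctmx_eq0 m n (X : 'M[C]_(m, n)) : \tr (X *m ctmx X) = 0 -> X = 0.
Proof.
rewrite mxtrace_mul_ctmxE => /psumr_eq0P X0; apply/matrixP => i j; rewrite mxE.
have /psumr_eq0P Xi0 : \sum_j X i j * (X i j)^* = 0.
  by apply: X0 => // k _; apply: sumr_ge0 => l _; apply: mul_conjC_ge0.
by apply/eqP; rewrite -mul_conjC_eq0 Xi0 // => k _; apply: mul_conjC_ge0.
Qed.

End TraceNorm.

Section PositiveSemidefinite.
Variable C : numClosedFieldType.

Lemma psdmx_mul_ctmx n k (X : 'M[C]_(n, k)) : psdmx (X *m ctmx X).
Proof.
split=> [|v]; first by rewrite ctmx_mul_ctmx.
have -> : ctmx v *m (X *m ctmx X) *m v = (ctmx v *m X) *m ctmx (ctmx v *m X).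
  by rewrite ctmx_mul ctmxK !mulmxA.
by rewrite -trace_mx11 mxtrace_mul_ctmx_ge0.
Qed.

Lemma psdmx_congr n k (A : 'M[C]_n) (M : 'M[C]_(n, k)) :
  psdmx A -> psdmx (ctmx M *m A *m M).
Proof.
move=> [Ah Apos]; split=> [|v]; first by rewrite !ctmx_mul ctmxK -Ah mulmxA.
by rewrite -!mulmxA !mulmxA -ctmx_mul -mulmxA; apply: Apos.
Qed.

Lemma psdmx_scale n a (A : 'M[C]_n) : 0 <= a -> psdmx A -> psdmx (a *: A).
Proof.
move=> a_ge0 [Ah Apos]; split=> [|v]; first by rewrite ctmxZ -Ah conj_Creal ?ger0_real.
by rewrite -scalemxAr -scalemxAl mxE mulr_ge0.
Qed.

Lemma psdmx_factor n (A : 'M[C]_n) : psdmx A -> exists B : 'M[C]_n, A = ctmx B *m B.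
Proof.
move=> [Ah Apos].
have /orthomx_spectralP EA : A \is normalmx by apply/normalmxP; rewrite -/(ctmx A) -Ah.
set P := spectralmx A in EA; set d := spectral_diag A in EA.
have P_unitary : P \is unitarymx := spectral_unitarymx A.
have PPt : P *m ctmx P = 1%:M := unitarymxP P_unitary.
have iP : invmx P = ctmx P := invmx_unitary P_unitary.
have PAPt : P *m A *m ctmx P = diag_mx d.
  by rewrite EA iP !mulmxA PPt mul1mx -mulmxA PPt mulmx1.
have d_ge0 k : 0 <= d 0 k.
  have := Apos (ctmx (row k P)); rewrite ctmxK.
  have -> : (row k P *m A *m ctmx (row k P)) 0 0 = (P *m A *m ctmx P) k k.
    by rewrite -row_mul !mxE; apply: eq_bigr => j _; rewrite !mxE.
  by rewrite PAPt mxE eqxx mulr1n.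
exists (diag_mx (\row_k sqrtC (d 0 k)) *m P).
rewrite EA iP ctmx_mul mulmxA -[ctmx P *m _ *m _]mulmxA; congr (_ *m _ *m _).
apply/matrixP => i j; rewrite mul_mx_diag !mxE.
case: eqVneq => [->|_]; last by rewrite !mulr0n rmorph0 mul0r.
by rewrite !mulr1n conj_Creal ?sqrtC_real // -expr2 sqrtCK.
Qed.

Lemma mxtrace_psdmx_mul_ge0 n (A B : 'M[C]_n) :
  psdmx A -> psdmx B -> 0 <= \tr (A *m B).
Proof.
move=> /psdmx_factor [a ->] /psdmx_factor [b ->].
have -> : \tr (ctmx a *m a *m (ctmx b *m b)) = \tr ((b *m ctmx a) *m ctmx (b *m ctmx a)).
  by rewrite ctmx_mul ctmxK mulmxA [LHS]mxtrace_mulC !mulmxA.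
exact: mxtrace_mul_ctmx_ge0.
Qed.

Lemma psdmx_scalar_sub_mul_ctmx n k (Z : 'M[C]_(n, k)) a :
  Z != 0 -> ctmx Z *m Z = a%:M -> psdmx (a%:M - Z *m ctmx Z).
Proof.
case: k Z => [Z|k Z Z_neq0 ZtZ]; first by rewrite thinmx0 eqxx.
have a_gt0 : 0 < a.
  have : 0 < \tr (ctmx Z *m Z).
    rewrite mxtrace_mulC lt_def mxtrace_mul_ctmx_ge0 andbT.
    by apply: contra Z_neq0 => /eqP/mxtrace_mul_ctmx_eq0 ->.
  by rewrite ZtZ mxtrace_scalar -mulr_natl pmulr_rgt0 ?ltr0n.
set L := a%:M - Z *m ctmx Z.
have Lh : ctmx L = L.
  by rewrite ctmxB ctmx_scalar ctmx_mul_ctmx conj_Creal ?gtr0_real.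
have LZ : L *m (Z *m ctmx Z) = 0.
  by rewrite mulmxBl mul_scalar_mx mulmxA -(mulmxA Z) ZtZ mul_mx_scalar -scalemxAl subrr.
(* [Z Z^* / a] is an orthogonal projection. *)
have LL : ctmx L *m L = a *: L by rewrite Lh {2}/L mulmxBr LZ subr0 mul_mx_scalar.
have -> : L = a^-1 *: (ctmx L *m L) by rewrite LL scalerA mulVf ?scale1r ?gt_eqF.
apply: psdmx_scale; first by rewrite invr_ge0 ltW.
by have := psdmx_mul_ctmx (ctmx L); rewrite ctmxK.
Qed.

Lemma psdmx_scale_invmx_sub n k (T : 'M[C]_n) (Y : 'M[C]_(n, k)) a :
  psdmx T -> T \in unitmx -> Y != 0 -> ctmx Y *m T *m Y = a%:M ->
  psdmx (a *: invmx T - Y *m ctmx Y).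
Proof.
move=> /psdmx_factor [B TE] TU Y_neq0 YTY.
have [BtU BU] : ctmx B \in unitmx /\ B \in unitmx by apply/andP; rewrite -unitmx_mul -TE.
have iT : invmx B *m invmx (ctmx B) = invmx T.
  by rewrite -[LHS](mulKmx TU) {2}TE !mulmxA !mulmxK.
set Z := B *m Y.
have Z_neq0 : Z != 0.
  by apply: contraNneq Y_neq0 => Z0; rewrite -(mulKmx BU Y) -/Z Z0 mulmx0.
have ZtZ : ctmx Z *m Z = a%:M by rewrite ctmx_mul -YTY TE !mulmxA.
have := psdmx_congr (ctmx (invmx B)) (psdmx_scalar_sub_mul_ctmx Z_neq0 ZtZ).
rewrite ctmxK ctmx_inv mulmxBr mulmxBl mul_mx_scalar -scalemxAl iT.
by rewrite /Z ctmx_mul !mulmxA mulVmx // mul1mx -mulmxA mulmxV // mulmx1.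
Qed.

End PositiveSemidefinite.

Section GramSum.
Variables (C : numClosedFieldType) (n : nat) (I : finType) (r : I -> nat).
Variable X : forall i, 'M[C]_(n, r i).

Let S := \sum_i X i *m ctmx (X i).

Lemma mul_sum_mul_ctmx_eq0 k (w : 'M[C]_(k, n)) : w *m S = 0 -> forall i, w *m X i = 0.
Proof.
move=> wS0 i; apply: mxtrace_mul_ctmx_eq0.
have : \sum_j \tr ((w *m X j) *m ctmx (w *m X j)) = 0.
  under eq_bigr do rewrite ctmx_mul !mulmxA -(mulmxA w).
  by rewrite -raddf_sum -mulmx_suml -mulmx_sumr -/S wS0 mul0mx raddf0.
by move/psumr_eq0P; apply=> // j _; apply: mxtrace_mul_ctmx_ge0.
Qed.

Lemma submx_mul_ctmx_sum i : (X i *m ctmx (X i) <= S)%MS.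
Proof.
rewrite submxE; set K := cokermx S.
(* [S] is Hermitian, so [K^*] lies in its left kernel. *)
have KtS : ctmx K *m S = 0.
  have Sh : ctmx S = S by rewrite ctmx_sum; under eq_bigr do rewrite ctmx_mul_ctmx.
  by rewrite -Sh -ctmx_mul mulmx_coker ctmx0.
have /(congr1 ctmx) := mul_sum_mul_ctmx_eq0 KtS i.
by rewrite ctmx_mul ctmxK ctmx0 -mulmxA => ->; rewrite mulmx0.
Qed.

Lemma unitmx_sum_mul_ctmx (A : I -> 'M[C]_n) :
  (forall i, (A i <= X i *m ctmx (X i))%MS) -> (1%:M <= \sum_i A i)%MS -> S \in unitmx.
Proof.
move=> sub_AX /submx_trans; rewrite -row_full_unit -sub1mx; apply.
by apply/sumsmx_subP => i _; apply: submx_trans (sub_AX i) (submx_mul_ctmx_sum i).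
Qed.

End GramSum.

Lemma Pd_le_mxtrace (C : numClosedFieldType) n m (p : 'I_m -> C)
    (rho Pi : 'I_m -> 'M[C]_n) (Z : 'M[C]_n) :
  is_measurement Pi -> (forall i, psdmx (Z - p i *: rho i)) -> Pd p rho Pi <= \tr Z.
Proof.
move=> [Pi_psd Pi_sum] Z_dom.
have -> : \tr Z = \sum_i \tr (Z *m Pi i) by rewrite -raddf_sum -mulmx_sumr Pi_sum mulmx1.
apply: ler_sum => i _; rewrite -subr_ge0 -mxtraceZ scalemxAl -raddfB -mulmxBl.
exact: mxtrace_psdmx_mul_ge0.
Qed.

Section InverseSquareRoot.
Variables (R : comUnitRingType) (n : nat) (S T : 'M[R]_n).
Hypotheses (S_unit : S \in unitmx) (TT : T *m T = invmx S).

Let TTS : T *m (T *m S) = 1%:M.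
Proof. by rewrite mulmxA TT mulVmx. Qed.

Lemma sqrt_invmx_unit : T \in unitmx.
Proof. by case: (mulmx1_unit TTS). Qed.

Lemma mulmx_sqrt_invmx : T *m S = invmx T.
Proof. by rewrite -[LHS](mulKmx sqrt_invmx_unit) TTS mulmx1. Qed.

End InverseSquareRoot.

Lemma mul_ctmx_scale_sqrtC (C : numClosedFieldType) m n a (X : 'M[C]_(m, n)) :
  0 <= a -> (sqrtC a *: X) *m ctmx (sqrtC a *: X) = a *: (X *m ctmx X).
Proof.
move=> a_ge0; rewrite ctmxZ -scalemxAl -scalemxAr scalerA.
by rewrite conj_Creal ?sqrtC_real // -expr2 sqrtCK.
Qed.

Theorem theorem1 (C : numClosedFieldType) (n m : nat)
  (rho : 'I_m -> 'M[C]_n) (p : 'I_m -> C)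
  (r : 'I_m -> nat) (phi : forall i : 'I_m, 'M[C]_(n, r i))
  (T : 'M[C]_n) (alpha : C) :
  (forall i, density (rho i)) ->
  (* the eigenvectors (with nonzero eigenvalue) of the rho_i span H,
     i.e. the sum of the ranges of the rho_i is the whole space *)
  (1%:M <= \sum_i rho i)%MS ->
  (forall i, 0 < p i) -> \sum_i p i = 1 ->
  (forall i, rho i = phi i *m ctmx (phi i)) ->
  let psi := fun i : 'I_m => sqrtC (p i) *: phi i in
  (* T = (Psi Psi^* )^{-1/2}: the (unique) PSD square root of the inverse
     of Psi Psi^* = sum_i psi_i psi_i^*  *)
  psdmx T -> T *m T = invmx (\sum_i psi i *m ctmx (psi i)) ->
  (forall i, ctmx (psi i) *m T *m psi i = alpha%:M) ->
  let Sigma := fun i : 'I_m => (T *m psi i) *m ctmx (T *m psi i) in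
  is_measurement Sigma /\
  (forall Pi : 'I_m -> 'M[C]_n, is_measurement Pi -> Pd p rho Pi <= Pd p rho Sigma).
Proof.
(* The priors need not sum to one for this argument. *)
move=> rho_density span p_gt0 _ rho_factor psi T_psd TT psiTpsi Sigma.
set S := \sum_i psi i *m ctmx (psi i) in TT.
have Q_rho i : psi i *m ctmx (psi i) = p i *: rho i.
  by rewrite mul_ctmx_scale_sqrtC ?ltW // rho_factor.
have S_unit : S \in unitmx.
  by apply: unitmx_sum_mul_ctmx span => i; rewrite Q_rho eqmx_scale ?gt_eqF.
have T_unit := sqrt_invmx_unit S_unit TT.
have TS := mulmx_sqrt_invmx S_unit TT.
have Sigma_E i : Sigma i = T *m (psi i *m ctmx (psi i)) *m T.
  by rewrite /Sigma ctmx_mul -T_psd.1 !mulmxA.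
split.
  split=> [i|]; first exact: psdmx_mul_ctmx.
  by under eq_bigr do rewrite Sigma_E; rewrite -mulmx_suml -mulmx_sumr TS mulVmx.
move=> Pi Pi_meas.
have -> : Pd p rho Sigma = \tr (alpha *: invmx T).
  have QTQ i : psi i *m ctmx (psi i) *m Sigma i = alpha *: (psi i *m ctmx (psi i) *m T).
    rewrite Sigma_E !mulmxA -(mulmxA (psi i)) -(mulmxA (psi i)) psiTpsi.
    by rewrite mul_mx_scalar -!scalemxAl mulmxA.
  rewrite /Pd; under eq_bigr do rewrite -mxtraceZ scalemxAl -Q_rho QTQ.
  by rewrite -raddf_sum /= -scaler_sumr -mulmx_suml -/S -TS !mxtraceZ mxtrace_mulC.
apply: Pd_le_mxtrace Pi_meas _ => i; rewrite -Q_rho.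
apply: psdmx_scale_invmx_sub => //; apply/eqP => psi0.
have := congr1 mxtrace (Q_rho i); rewrite psi0 mul0mx raddf0 mxtraceZ (rho_density i).2.
by rewrite mulr1 => /esym/eqP; rewrite gt_eqF.
Qed.
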